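(* For every $m\ge2$, no vertex of the unweighted subdivided star $G(m)$ is sedentary.
   Context: $G(m)$ is obtained from the star $K_{1,m}$ by subdividing each edge once: it has a central vertex of degree $m$ joined to $m$ vertices of degree two, each of which is adjacent to one further leaf (so $G(m)$ has $2m+1$ vertices). For a graph with adjacency matrix $A$, $U(t)=e^{itA}$; a vertex $u$ is sedentary if $\inf_{t>0}|U(t)_{u,u}|\ge C$ for some constant $0<C\le1$, and not sedentary if this infimum is $0$. *)

From HB Require Import structures.
From mathcomp Require Import all_boot all_order all_algebra.
From mathcomp Require Import all_classical all_reals all_analysis.
Set Implicit Arguments. Unset Strict Implicit. Unset Printing Implicit Defensive.
Import Order.TTheory GRing.Theory Num.Theory.
Import numFieldNormedType.Exports.
Local Open Scope ring_scope.

(* The subdivided star G(m) on vertex set 'I_(2m+1):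
   vertex 0 is the centre, vertices 1..m are the degree-two vertices,
   vertex i (1 <= i <= m) is adjacent to 0 and to the leaf i+m. *)
Definition gm_arc (m : nat) (i j : nat) : bool :=
  ((i == 0%N) && (1 <= j <= m)%N) || ((1 <= i <= m)%N && (j == i + m)%N).

Definition gm_edge (m : nat) (i j : 'I_((2 * m).+1)) : bool :=
  gm_arc m i j || gm_arc m j i.

Definition adjG (R : realType) (m : nat) : 'M[R]_((2 * m).+1) :=
  \matrix_(i, j) (gm_edge i j)%:R.

(* U(t) = e^{itA} = cos(tA) + i sin(tA) for a real matrix A, with
   cos(tA) = sum_k (-1)^k t^(2k) A^(2k) / (2k)!  and
   sin(tA) = sum_k (-1)^k t^(2k+1) A^(2k+1) / (2k+1)!  (entrywise series; the series converge
   absolutely, and limn denotes the limit of the partial sums). *)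
Definition cosM (R : realType) (n : nat) (A : 'M[R]_n.+1) (t : R)
  : 'M[R]_n.+1 :=
  \matrix_(i, j) limn (([series
      ((-1) ^+ k * t ^+ (2 * k) / ((2 * k)`!)%:R * (A ^+ (2 * k)) i j)]_k : R ^nat)).

Definition sinM (R : realType) (n : nat) (A : 'M[R]_n.+1) (t : R)
  : 'M[R]_n.+1 :=
  \matrix_(i, j) limn (([series
      ((-1) ^+ k * t ^+ (2 * k).+1 / ((2 * k).+1`!)%:R
         * (A ^+ (2 * k).+1) i j)]_k : R ^nat)).

Definition absU (R : realType) (n : nat) (A : 'M[R]_n.+1) (t : R)
  (u v : 'I_n.+1) : R :=
  Num.sqrt ((cosM A t u v) ^+ 2 + (sinM A t u v) ^+ 2).

Definition sedentary (R : realType) (n : nat) (A : 'M[R]_n.+1)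
  (u : 'I_n.+1) : Prop :=
  exists C : R, 0 < C <= 1 /\ forall t : R, 0 < t -> C <= absU A t u u.

(* The eigenvalues of G(m) are 0, +-1 (each of multiplicity m - 1) and
   +-sqrt(m + 1).  Hence for every vertex u the closed-walk counts have the form
   (A^(2k))_{uu} = c1 (m + 1)^k + c2 + c3 [k = 0], while (A^(2k+1))_{uu} = 0
   since G(m) is bipartite, so U(t)_{uu} = c1 cos(sqrt(m + 1) t) + c2 cos t + c3
   is real and equals 1 at t = 0.  At t = pi / sqrt(m + 1) for the centre, and at
   t = pi for the other vertices (this is where m >= 2 is needed), it is <= 0,
   so U(t)_{uu} vanishes at some t > 0 by the intermediate value theorem.  The
   walk counts are found by computing the whole column of A^n at u, by
   induction on n. *)

From HB Require Import structures.
From mathcomp Require Import all_boot all_order all_algebra.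
From mathcomp Require Import all_classical all_reals all_analysis.
From mathcomp Require Import zify ring lra.
Set Implicit Arguments.
Unset Strict Implicit.
Unset Printing Implicit Defensive.
Import Order.TTheory GRing.Theory Num.Theory.
Import numFieldNormedType.Exports.
Local Open Scope classical_set_scope.
Local Open Scope ring_scope.

Section AnalyticFacts.
Variable R : realType.

Lemma cvg_series_delta0 : series (fun k => (k == 0%N)%:R : R) @ \oo --> (1 : R).
Proof.
apply: cvg_near_cst; exists 1%N => // n /= hn.
rewrite /series /= big_ltn // big_nat_cond big1 ?addr0 //.
by case=> [|k] /andP[/andP[]].
Qed.

Lemma cosM_entry_two_freq (n : nat) (A : 'M[R]_n.+1) (u v : 'I_n.+1)
    (c1 c2 c3 mu : R) :
  0 <= mu ->
  (forall k, (A ^+ (2 * k)) u v = c1 * mu ^+ k + c2 + c3 * (k == 0%N)%:R) ->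
  forall t, cosM A t u v = c1 * cos (Num.sqrt mu * t) + c2 * cos t + c3.
Proof.
move=> mu0 hA t; rewrite /cosM mxE; apply: (cvg_lim (@Rhausdorff R)).
have -> : ([series (-1) ^+ k * t ^+ (2 * k) / ((2 * k)`!)%:R * (A ^+ (2 * k)) u v]_k
             : R^nat)
    = (fun N => c1 * series (cos_coeff' (Num.sqrt mu * t)) N
                + c2 * series (cos_coeff' t) N + c3 * series (fun k => (k == 0%N)%:R) N).
  apply/funext => N; rewrite /series /= !big_distrr -!big_split /=.
  apply: eq_bigr => k _; rewrite hA /cos_coeff' -mul2n exprMn.
  rewrite [Num.sqrt mu ^+ _]exprM sqr_sqrtr // -!exprnP.
  by case: k => [|k]; rewrite ?muln0 ?fact0 ?invr1 /=; ring.
apply: cvgD; first by apply: cvgD; apply: cvgMl_tmp; exact: cvg_cos_coeff'.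
by rewrite -{2}(mulr1 c3); apply: cvgMl_tmp; exact: cvg_series_delta0.
Qed.

Lemma sinM_entry_eq0 (n : nat) (A : 'M[R]_n.+1) (u v : 'I_n.+1) :
  (forall k, (A ^+ (2 * k).+1) u v = 0) -> forall t, sinM A t u v = 0.
Proof.
move=> hA t; rewrite /sinM mxE; apply: (cvg_lim (@Rhausdorff R)).
apply: cvg_near_cst; exists 0%N => // N _.
by rewrite /series /= big1 // => k _; rewrite hA mulr0.
Qed.

Lemma continuous_root_pos (f : R -> R) (T : R) :
  continuous f -> 0 < f 0 -> 0 < T -> f T <= 0 -> exists2 t, 0 < t & f t = 0.
Proof.
move=> cf f0 T0 fT.
have [|t] := @IVT _ f 0 T 0 (ltW T0) (continuous_subspaceT cf).
  by rewrite ge_min le_max fT (ltW f0) orbT.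
rewrite in_itv /= => /andP[t0 _] ft; exists t => //.
rewrite lt_neqAle t0 andbT; apply/eqP => t_eq0.
by rewrite -t_eq0 in ft; rewrite ft ltxx in f0.
Qed.

Lemma cos_comb_continuous (c1 c2 c3 s : R) :
  continuous (fun t => c1 * cos (s * t) + c2 * cos t + c3).
Proof.
move=> x; apply: cvgD; last exact: cvg_cst.
apply: cvgD; apply: cvgMl_tmp; last exact: continuous_cos.
apply: (@continuous_comp _ _ _ ( *%R s) cos); last exact: continuous_cos.
by apply: cvgMl_tmp; exact: cvg_id.
Qed.

Lemma not_sedentary_two_freq (n : nat) (A : 'M[R]_n.+1) (u : 'I_n.+1)
    (c1 c2 c3 mu T : R) :
  0 <= mu -> 0 < T ->
  (forall k, (A ^+ (2 * k)) u u = c1 * mu ^+ k + c2 + c3 * (k == 0%N)%:R) ->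
  (forall k, (A ^+ (2 * k).+1) u u = 0) ->
  c1 * cos (Num.sqrt mu * T) + c2 * cos T + c3 <= 0 ->
  ~ sedentary A u.
Proof.
move=> mu0 T0 hev hodd hT [C [/andP[C0 _] hC]].
have f0 : 0 < c1 * cos (Num.sqrt mu * 0) + c2 * cos 0 + c3.
  have := hev 0%N; rewrite muln0 !expr0 mxE eqxx !mulr1 mulr0 cos0 !mulr1 => <-.
  exact: ltr01.
have [t t0 ft] := continuous_root_pos (@cos_comb_continuous c1 c2 c3 _) f0 T0 hT.
have := hC t t0.
rewrite /absU (cosM_entry_two_freq mu0 hev) ft (sinM_entry_eq0 hodd) expr0n /= addr0 sqrtr0.
by move=> /(lt_le_trans C0); rewrite ltxx.
Qed.

Lemma cos_comb_pi_le0 (c1 c2 c3 s : R) :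
  0 <= c1 -> c1 + c3 <= c2 -> c1 * cos (s * pi) + c2 * cos pi + c3 <= 0.
Proof.
move=> c10 hc; rewrite cospi mulrN1.
have : c1 * cos (s * pi) <= c1 by rewrite ler_piMr ?cos_le1.
lra.
Qed.

End AnalyticFacts.

Section SubdividedStarWalks.
Variables (R : realType) (m : nat).

Lemma sum_nat_pick (lo hi k : nat) (F : nat -> R) : (lo <= k < hi)%N ->
  \sum_(lo <= j < hi) (j == k)%:R * F j = F k.
Proof.
move=> hk; under eq_bigr => j _ do rewrite mulr_natl mulrb.
by rewrite -big_mkcond big_nat1_eq hk.
Qed.

Lemma sum_nat_interval (lo hi n : nat) (F : nat -> R) : (lo <= hi <= n)%N ->
  \sum_(0 <= j < n) (lo <= j < hi)%:R * F j = \sum_(lo <= j < hi) F j.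
Proof.
move=> /andP[lohi hin].
rewrite (@big_cat_nat _ _ _ lo) ?(leq_trans lohi) //=.
rewrite [X in _ + X](@big_cat_nat _ _ _ hi) //=.
have out j : ~~ (lo <= j < hi)%N -> (lo <= j < hi)%:R * F j = 0.
  by move/negbTE ->; rewrite mul0r.
rewrite [X in X + _]big1_seq => [|j]; last first.
  by rewrite mem_index_iota => /andP[_ hj]; apply: out; lia.
rewrite [X in _ + (_ + X)]big1_seq => [|j]; last first.
  by rewrite mem_index_iota => /andP[_ hj]; apply: out; lia.
by rewrite add0r addr0; apply: eq_big_nat => j ->; rewrite mul1r.
Qed.

Definition gm_nbr (F : nat -> R) (i : nat) : R :=
  if i == 0%N then \sum_(1 <= j < m.+1) F j
  else if (i <= m)%N then F 0%N + F (i + m)%N else F (i - m)%N.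

Lemma adjG_mul_colE (M : 'M[R]_((2 * m).+1)) (u i : 'I_((2 * m).+1)) (F : nat -> R) :
  (forall j : 'I_((2 * m).+1), M j u = F j) -> (adjG R m *m M) i u = gm_nbr F i.
Proof.
move=> hF; rewrite mxE.
under eq_bigr => j _ do rewrite hF mxE /gm_edge.
rewrite -(big_mkord xpredT (fun j => (gm_arc m i j || gm_arc m j i)%:R * F j)).
case: i => i /= ilt; rewrite /gm_nbr /gm_arc.
case: eqP => [->|i0]; last case: ifP => him.
- rewrite -(@sum_nat_interval 1 m.+1 (2 * m).+1); last by lia.
  by apply: eq_big_nat => j hj /=; congr (_%:R * _); lia.
- rewrite (@eq_big_nat _ _ _ _ _ _
      (fun j => (j == 0%N)%:R * F j + (j == i + m)%N%:R * F j)).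
    by rewrite big_split /= !sum_nat_pick //; lia.
  by move=> j hj /=; rewrite -mulrDl -natrD; congr (_%:R * _); lia.
- rewrite -(@sum_nat_pick 0 (2 * m).+1 (i - m)); last by lia.
  by apply: eq_big_nat => j hj /=; congr (_%:R * _); lia.
Qed.

Lemma adjG_expr_col (u : 'I_((2 * m).+1)) (E O : nat -> nat -> R) :
  (forall j : 'I_((2 * m).+1), E 0%N j = (j == u :> nat)%:R) ->
  (forall k (i : 'I_((2 * m).+1)), O k i = gm_nbr (E k) i) ->
  (forall k (i : 'I_((2 * m).+1)), E k.+1 i = gm_nbr (O k) i) ->
  forall k (j : 'I_((2 * m).+1)),
    (adjG R m ^+ (2 * k)) j u = E k j /\ (adjG R m ^+ (2 * k).+1) j u = O k j.
Proof.
move=> E0 OE EO.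
have step n (G : nat -> R) : (forall j : 'I_((2 * m).+1), (adjG R m ^+ n) j u = G j) ->
    forall i : 'I_((2 * m).+1), (adjG R m ^+ n.+1) i u = gm_nbr G i.
  by move=> hG i; rewrite exprS -mulmxE; exact: adjG_mul_colE.
have even k (j : 'I_((2 * m).+1)) : (adjG R m ^+ (2 * k)) j u = E k j.
  elim: k j => [|k IH] j; first by rewrite muln0 expr0 mxE E0.
  by rewrite mulnS add2n EO; apply: (step) => i; rewrite OE; exact: step.
by move=> k j; rewrite OE; split; [exact: even | exact: step].
Qed.

Definition gm_col (c : R) (mid leaf : nat -> R) (i : nat) : R :=
  if i == 0%N then c else if (i <= m)%N then mid i else leaf (i - m)%N.

Lemma gm_col0 c mid leaf : gm_col c mid leaf 0 = c.
Proof. by []. Qed.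

Lemma gm_col_mid c mid leaf i : (1 <= i <= m)%N -> gm_col c mid leaf i = mid i.
Proof. by move=> /andP[i_gt0 i_le]; rewrite /gm_col i_le; case: eqP i_gt0 => [->|]. Qed.

Lemma gm_col_leaf c mid leaf i : (m < i)%N -> gm_col c mid leaf i = leaf (i - m)%N.
Proof. by move=> him; rewrite /gm_col leqNgt him; case: eqP him => [->|]. Qed.

Lemma eq_gm_col c c' mid mid' leaf leaf' (i : nat) : (i < (2 * m).+1)%N -> c = c' ->
  (forall j, (1 <= j <= m)%N -> mid j = mid' j) ->
  (forall j, (1 <= j <= m)%N -> leaf j = leaf' j) ->
  gm_col c mid leaf i = gm_col c' mid' leaf' i.
Proof.
move=> hi -> hmid hleaf; rewrite /gm_col.
by case: eqP => // i0; case: leqP => him; [apply: hmid | apply: hleaf]; lia.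
Qed.

Lemma delta_gm_col (i u : nat) :
  (i == u)%:R = gm_col (u == 0%N)%:R (fun j => (j == u)%:R) (fun j => (j + m == u)%N%:R) i.
Proof.
rewrite /gm_col; have [->|_] := eqVneq i 0%N; first by rewrite eq_sym.
by case: leqP => // him; rewrite subnK // ltnW.
Qed.

Lemma gm_nbr_col c mid leaf (i : nat) : (i < (2 * m).+1)%N ->
  gm_nbr (gm_col c mid leaf) i
  = gm_col (\sum_(1 <= j < m.+1) mid j) (fun j => c + leaf j) mid i.
Proof.
move=> hi; rewrite /gm_nbr; case: eqP => [->|i0]; last case: leqP => him.
- by apply: eq_big_nat => j hj; rewrite gm_col_mid.
- by rewrite [RHS]gm_col_mid ?(@gm_col_leaf _ _ _ (i + m)) ?addnK //; lia.
- by rewrite [RHS]gm_col_leaf // gm_col_mid //; lia.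
Qed.

Hypothesis m_gt0 : (0 < m)%N.
Local Notation P := (m%:R + 1 : R).
Let m_neq0 : (m%:R : R) != 0. Proof. by rewrite pnatr_eq0 -lt0n. Qed.
Let P_neq0 : P != 0. Proof. by rewrite natr1 pnatr_eq0. Qed.

Lemma sum_delta_shift (x : R) (a : nat) : (1 <= a <= m)%N ->
  \sum_(1 <= j < m.+1) ((x - 1) / m%:R + (j == a)%:R) = x.
Proof.
move=> ha; rewrite big_split /= sumr_const_nat subn1 /=.
rewrite (_ : \sum_(1 <= j < m.+1) (j == a)%:R = 1).
  by rewrite -mulr_natr; field.
by rewrite (eq_bigr (fun j => (j == a)%:R * 1)) ?sum_nat_pick // => j _; rewrite mulr1.
Qed.

Lemma adjG_expr_centre k :
  (adjG R m ^+ (2 * k)) ord0 ord0 = m%:R / P * P ^+ k + 0 + 1 / P * (k == 0%N)%:R /\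
  (adjG R m ^+ (2 * k).+1) ord0 ord0 = 0.
Proof.
pose E k := gm_col (m%:R / P * P ^+ k + (k == 0%N)%:R / P) (fun=> 0)
  (fun=> (P ^+ k - (k == 0%N)%:R) / P).
pose O k := gm_col 0 (fun=> P ^+ k) (fun=> 0).
have E0 (j : 'I_((2 * m).+1)) : E 0%N j = (j == 0%N :> nat)%:R.
  rewrite /E delta_gm_col.
  apply: eq_gm_col (ltn_ord j) _ _ _ => [/=|[|i] // _|[|i] // _].
  - by field.
  - by rewrite addSn subrr mul0r.
have OE l (j : 'I_((2 * m).+1)) : O l j = gm_nbr (E l) j.
  rewrite /E /O (gm_nbr_col _ _ _ (ltn_ord j)).
  apply: eq_gm_col (ltn_ord j) _ _ _ => [|i _|i _] /=.
  - by rewrite big1.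
  - by field.
  - by [].
have EO l (j : 'I_((2 * m).+1)) : E l.+1 j = gm_nbr (O l) j.
  rewrite /E /O (gm_nbr_col _ _ _ (ltn_ord j)).
  apply: eq_gm_col (ltn_ord j) _ _ _ => [|i _|i _] /=.
  - by rewrite sumr_const_nat subn1 exprS -mulr_natr; field.
  - by rewrite addr0.
  - by rewrite exprS subr0; field.
have [-> ->] := @adjG_expr_col ord0 E O E0 OE EO k ord0.
by rewrite /E /O !gm_col0; split => //; field.
Qed.

Lemma adjG_expr_middle (a : 'I_((2 * m).+1)) k : (1 <= a <= m)%N ->
  (adjG R m ^+ (2 * k)) a a = 1 / m%:R * P ^+ k + (m%:R - 1) / m%:R + 0 * (k == 0%N)%:R /\
  (adjG R m ^+ (2 * k).+1) a a = 0.
Proof.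
move=> ha.
pose E k := gm_col 0 (fun j => (P ^+ k - 1) / m%:R + (j == a)%:R) (fun=> 0).
pose O k := gm_col (P ^+ k) (fun=> 0) (fun j => (P ^+ k - 1) / m%:R + (j == a)%:R).
have E0 (j : 'I_((2 * m).+1)) : E 0%N j = (j == a :> nat)%:R.
  rewrite /E delta_gm_col; apply: eq_gm_col (ltn_ord j) _ _ _ => [|i _|i hi] /=.
  - by rewrite (_ : (a == 0 :> nat) = false) //; lia.
  - by rewrite expr0 subrr mul0r add0r.
  - by rewrite (_ : (i + m == a)%N = false) //; lia.
have OE l (j : 'I_((2 * m).+1)) : O l j = gm_nbr (E l) j.
  rewrite /E /O (gm_nbr_col _ _ _ (ltn_ord j)).
  apply: eq_gm_col (ltn_ord j) _ _ _ => [|i _|i _] /=.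
  - by rewrite sum_delta_shift.
  - by rewrite add0r.
  - by [].
have EO l (j : 'I_((2 * m).+1)) : E l.+1 j = gm_nbr (O l) j.
  rewrite /E /O (gm_nbr_col _ _ _ (ltn_ord j)).
  apply: eq_gm_col (ltn_ord j) _ _ _ => [|i _|i _] /=.
  - by rewrite big1.
  - by rewrite exprS; field.
  - by [].
have [-> ->] := @adjG_expr_col a E O E0 OE EO k a.
by rewrite /E /O !gm_col_mid // eqxx mul0r addr0 /=; split => //; field.
Qed.

Lemma adjG_expr_leaf (a : nat) (u : 'I_((2 * m).+1)) k :
  (1 <= a <= m)%N -> u = (a + m)%N :> nat ->
  (adjG R m ^+ (2 * k)) u u
    = 1 / (m%:R * P) * P ^+ k + (m%:R - 1) / m%:R + 1 / P * (k == 0%N)%:R /\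
  (adjG R m ^+ (2 * k).+1) u u = 0.
Proof.
move=> ha hu.
pose E k := gm_col ((P ^+ k - (k == 0%N)%:R) / P) (fun=> 0)
  (fun j => P ^+ k / (m%:R * P) - 1 / m%:R + (k == 0%N)%:R / P + (j == a)%:R).
pose O k := gm_col 0 (fun j => (P ^+ k - 1) / m%:R + (j == a)%:R) (fun=> 0).
have E0 (j : 'I_((2 * m).+1)) : E 0%N j = (j == u :> nat)%:R.
  rewrite /E delta_gm_col hu; apply: eq_gm_col (ltn_ord j) _ _ _ => [|i hi|i _] /=.
  - by rewrite expr0 subrr mul0r (_ : (a + m == 0)%N = false) //; lia.
  - by rewrite (_ : (i == a + m)%N = false) //; lia.
  - by rewrite eqn_add2r expr0; field; rewrite ?P_neq0 ?m_neq0.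
have OE l (j : 'I_((2 * m).+1)) : O l j = gm_nbr (E l) j.
  rewrite /E /O (gm_nbr_col _ _ _ (ltn_ord j)).
  apply: eq_gm_col (ltn_ord j) _ _ _ => [|i _|i _] /=.
  - by rewrite big1.
  - by field; rewrite ?P_neq0 ?m_neq0.
  - by [].
have EO l (j : 'I_((2 * m).+1)) : E l.+1 j = gm_nbr (O l) j.
  rewrite /E /O (gm_nbr_col _ _ _ (ltn_ord j)).
  apply: eq_gm_col (ltn_ord j) _ _ _ => [|i _|i _] /=.
  - by rewrite sum_delta_shift // exprS subr0; field; rewrite ?P_neq0 ?m_neq0.
  - by rewrite addr0.
  - by rewrite exprS; field; rewrite ?P_neq0 ?m_neq0.
have [-> ->] := @adjG_expr_col u E O E0 OE EO k u.
have hum : (m < a + m)%N by lia.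
rewrite /E /O hu !(gm_col_leaf _ _ _ hum) addnK eqxx /=.
by split => //; field; rewrite ?P_neq0 ?m_neq0.
Qed.

End SubdividedStarWalks.

Section NonSedentaryVertices.
Variables (R : realType) (m : nat).
Local Notation P := (m%:R + 1 : R).

Let P_gt0 : 0 < P. Proof. by rewrite ltr_pwDr ?ler0n. Qed.

Let inv_le_pred_div : (2 <= m)%N -> 1 / m%:R <= (m%:R - 1) / m%:R :> R.
Proof.
move=> m_ge2; have m2 : (2 : R) <= m%:R by rewrite ler_nat.
by rewrite ler_pM2r ?invr_gt0; lra.
Qed.

Lemma centre_not_sedentary : (0 < m)%N -> ~ sedentary (adjG R m) ord0.
Proof.
move=> m_gt0; have sP_gt0 : 0 < Num.sqrt P by rewrite sqrtr_gt0.
apply: (not_sedentary_two_freq (c1 := m%:R / P) (c2 := 0) (c3 := 1 / P) (mu := P)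
  (T := pi / Num.sqrt P)).
- exact: ltW.
- by rewrite divr_gt0 ?pi_gt0.
- by move=> k; case: (adjG_expr_centre R m k).
- by move=> k; case: (adjG_expr_centre R m k).
rewrite mulrCA divff ?gt_eqF // mulr1 cospi mul0r addr0.
rewrite (_ : _ + _ = (1 - m%:R) / P); last by field; rewrite gt_eqF.
by rewrite mulr_le0_ge0 // ?subr_le0 ?ler1n // invr_ge0 ltW.
Qed.

Lemma middle_not_sedentary (a : 'I_((2 * m).+1)) :
  (2 <= m)%N -> (1 <= a <= m)%N -> ~ sedentary (adjG R m) a.
Proof.
move=> m_ge2 ha; have m_gt0 : (0 < m)%N by lia.
apply: (not_sedentary_two_freq (c1 := 1 / m%:R) (c2 := (m%:R - 1) / m%:R) (c3 := 0)
  (mu := P) (T := pi)).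
- exact: ltW.
- exact: pi_gt0.
- by move=> k; case: (adjG_expr_middle R m_gt0 k ha).
- by move=> k; case: (adjG_expr_middle R m_gt0 k ha).
by apply: cos_comb_pi_le0; rewrite ?addr0 ?inv_le_pred_div // divr_ge0 ?ler0n.
Qed.

Lemma leaf_not_sedentary (u : 'I_((2 * m).+1)) :
  (2 <= m)%N -> (m < u)%N -> ~ sedentary (adjG R m) u.
Proof.
move=> m_ge2 hu; have m_gt0 : (0 < m)%N by lia.
have ha : (1 <= u - m <= m)%N by have := ltn_ord u; lia.
have hua : u = (u - m + m)%N :> nat by lia.
apply: (not_sedentary_two_freq (c1 := 1 / (m%:R * P)) (c2 := (m%:R - 1) / m%:R)
  (c3 := 1 / P) (mu := P) (T := pi)).
- exact: ltW.
- exact: pi_gt0.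
- by move=> k; case: (adjG_expr_leaf R m_gt0 k ha hua).
- by move=> k; case: (adjG_expr_leaf R m_gt0 k ha hua).
apply: cos_comb_pi_le0; first by rewrite divr_ge0 ?mulr_ge0 ?ler0n ?ltW.
rewrite (_ : _ + _ = 1 / m%:R) ?inv_le_pred_div //.
by field; rewrite pnatr_eq0 -lt0n m_gt0 gt_eqF.
Qed.

End NonSedentaryVertices.

Theorem corollary19 (R : realType) (m : nat) :
  (2 <= m)%N -> forall u : 'I_((2 * m).+1), ~ sedentary (adjG R m) u.
Proof.
move=> m_ge2 u.
have [u0|u_gt0] := posnP u.
  by rewrite (_ : u = ord0); [apply: centre_not_sedentary; lia | apply: val_inj].
have [u_le|u_gt] := leqP u m; first by apply: middle_not_sedentary; rewrite ?u_gt0.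
exact: leaf_not_sedentary.
Qed.
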